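(* Let $n\geqslant 2$ be an integer. Then $(\mathbf{1})\alpha=\mathbf{1}$ for every isometry $\alpha$ of $\mathbb{N}^n$ onto itself, where $\mathbf{1}=(1,\ldots,1)$.
   Context: $\mathbb{N}=\{1,2,3,\ldots\}$ and $\mathbb{N}^n$ carries the Euclidean metric $d((x_1,\ldots,x_n),(y_1,\ldots,y_n))=\sqrt{\sum_{i=1}^n(x_i-y_i)^2}$. An isometry of $\mathbb{N}^n$ is a distance-preserving bijection $\mathbb{N}^n\to\mathbb{N}^n$; maps are written on the right of their arguments. *)

From mathcomp Require Import all_boot all_order all_algebra.
Set Implicit Arguments. Unset Strict Implicit. Unset Printing Implicit Defensive.
Import GRing.Theory Num.Theory.

Definition NN (n : nat) : Type := {t : n.-tuple nat | all (fun k => 0 < k)%N t}.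

Definition coord (n : nat) (x : NN n) (i : 'I_n) : nat := tnth (proj1_sig x) i.

Definition dist2 (n : nat) (x y : NN n) : int :=
  (\sum_(i < n) ((coord x i)%:Z - (coord y i)%:Z) ^+ 2)%R.

(* An isometry of N^n: a distance-preserving bijection N^n -> N^n.
   Since d = sqrt(dist2) and sqrt is injective on nonnegative reals,
   preserving d is the same as preserving dist2. *)
Definition isometryNn (n : nat) (a : NN n -> NN n) : Prop :=
  bijective a /\ forall x y : NN n, dist2 (a x) (a y) = dist2 x y.

Lemma all_one_pos (n : nat) : all (fun k => 0 < k)%N (nseq_tuple n 1%N).
Proof. by rewrite all_nseq orbT. Qed.

Definition one_pt (n : nat) : NN n := exist _ (nseq_tuple n 1%N) (all_one_pos n).

From Pilot Require Import Defs.
From mathcomp Require Import all_boot all_order all_algebra.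
From mathcomp Require Import zify.
Set Implicit Arguments. Unset Strict Implicit. Unset Printing Implicit Defensive.
Import GRing.Theory Num.Theory.
Local Notation coord := Defs.coord.

(* The points at distance 1 from x are x +- e_i.  From 1 only the n moves
   1 + e_i stay in N^n, whereas a point y <> 1 has some coordinate y_j >= 2
   and so has the n + 1 distinct neighbours y + e_i and y - e_j.  A bijective
   isometry a maps the unit sphere around 1 onto the unit sphere around a 1,
   so a 1 cannot have more unit neighbours than 1 does. *)

Lemma leq_card_rel (T U : finType) (R : T -> U -> bool) :
  (forall t, exists u, R t u) -> (forall t t' u, R t u -> R t' u -> t = t') ->
  #|T| <= #|U|.
Proof.
move=> Rtot Runiq; apply: (@leq_card _ _ (fun t => xchoose (Rtot t))) => t t' e.
by apply: (Runiq _ _ (xchoose (Rtot t))); [|rewrite e]; apply: xchooseP.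
Qed.

Lemma sum_sqr_eq1 (I : finType) (u : I -> int) :
  (\sum_i u i ^+ 2 = 1)%R -> exists i, (u i ^+ 2 = 1)%R /\ forall j, j != i -> u j = 0%R.
Proof.
move=> sum1; have [i ui|u0] := pickP (fun i => u i != 0%R); last first.
  by move: sum1; rewrite big1 // => i _; rewrite (eqP (negbFE (u0 i))) expr0n.
have sq_ge0 j : (0 <= u j ^+ 2)%R by rewrite sqr_ge0.
have ui2 : (1 <= u i ^+ 2)%R by move: ui; rewrite expr2; nia.
rewrite (bigD1 i) //= in sum1.
have rest0 : (\sum_(j | j != i) u j ^+ 2 = 0)%R.
  have : (0 <= \sum_(j | j != i) u j ^+ 2)%R by apply: sumr_ge0 => j _.
  by move: sum1 ui2; move: (u i ^+ 2)%R (\sum_(j | j != i) u j ^+ 2)%R; lia.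
exists i; split; first by move: sum1; rewrite rest0 addr0.
move=> j ji; have /eqP := psumr_eq0P (fun j _ => sq_ge0 j) rest0 ji.
by rewrite sqrf_eq0 => /eqP.
Qed.

Section Points.

Variable n : nat.
Implicit Types (x y z : NN n) (i j : 'I_n).

Lemma eq_NN x y : (forall i, coord x i = coord y i) -> x = y.
Proof. by move=> eq_xy; apply/val_inj/eq_from_tnth. Qed.

Lemma coord_gt0 x i : 0 < coord x i.
Proof. exact: (allP (proj2_sig x)) _ (mem_tnth i _). Qed.

Lemma coord_one i : coord (one_pt n) i = 1.
Proof. by rewrite /coord tnth_nseq. Qed.

Lemma dist2C x y : dist2 x y = dist2 y x.
Proof. by apply: eq_bigr => i _; rewrite -sqrrN opprB. Qed.

Lemma all_gt0_mktuple (h : 'I_n -> nat) :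
  (forall i, 0 < h i) -> all (fun k => 0 < k) [tuple h i | i < n].
Proof. by move=> h_gt0; apply/all_tnthP => i; rewrite tnth_mktuple. Qed.

Lemma upd_gt0 x i v : 0 < v -> forall k, 0 < if k == i then v else coord x k.
Proof. by move=> v_gt0 k; case: ifP; rewrite ?coord_gt0. Qed.

Definition upd x i v (v_gt0 : 0 < v) : NN n :=
  exist _ [tuple if k == i then v else coord x k | k < n]
        (all_gt0_mktuple (upd_gt0 x i v_gt0)).

Lemma coord_upd x i v v_gt0 j :
  coord (@upd x i v v_gt0) j = if j == i then v else coord x j.
Proof. by rewrite /coord tnth_mktuple. Qed.

Lemma dist2_upd x i v v_gt0 :
  dist2 (@upd x i v v_gt0) x = ((v%:Z - (coord x i)%:Z) ^+ 2)%R.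
Proof.
rewrite /dist2 (bigD1 i) //= big1 ?addr0 => [|j ji]; first by rewrite coord_upd eqxx.
by rewrite coord_upd (negbTE ji) subrr expr0n.
Qed.

Definition incr x i : NN n := upd x i (ltn0Sn (coord x i)).

Lemma coord_incr x i j : coord (incr x i) j = coord x j + (j == i).
Proof. by rewrite coord_upd; case: eqP => [->|]; rewrite ?addn1 ?addn0. Qed.

Lemma dist2_incr x i : dist2 (incr x i) x = 1%R.
Proof. by rewrite dist2_upd -addn1 PoszD addrAC subrr add0r expr1n. Qed.

Lemma unit_sphere_one z : dist2 (one_pt n) z = 1%R -> exists i, z = incr (one_pt n) i.
Proof.
move=> /sum_sqr_eq1 [i [zi zj]]; exists i; apply: eq_NN => j.
rewrite coord_incr coord_one; have := coord_gt0 z j.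
case: eqP => [->|/eqP ji]; last by have := zj j ji; rewrite coord_one; lia.
by move: zi; rewrite coord_one expr2; nia.
Qed.

Lemma card_unit_sphere_one (T : finType) (g : T -> NN n) :
  injective g -> (forall t, dist2 (one_pt n) (g t) = 1%R) -> #|T| <= n.
Proof.
move=> g_inj g1; rewrite -[n]card_ord.
apply: (@leq_card_rel _ _ (fun t i => g t == incr (one_pt n) i)).
  by move=> t; have [i ->] := unit_sphere_one (g1 t); exists i.
by move=> t t' i /eqP gt /eqP gt'; apply: g_inj; rewrite gt gt'.
Qed.

Section Neighbours.

Variables (y : NN n) (j : 'I_n).
Hypothesis yj_gt1 : 1 < coord y j.

Let predn_gt0 : 0 < (coord y j).-1. Proof. by rewrite -subn1 subn_gt0. Qed.

Definition neighbour (o : option 'I_n) : NN n :=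
  if o is Some i then incr y i else upd y j predn_gt0.

Lemma dist2_neighbour o : dist2 (neighbour o) y = 1%R.
Proof.
case: o => [i|]; first exact: dist2_incr.
rewrite dist2_upd -(prednK (ltnW yj_gt1)) /= -addn1 PoszD opprD addrA subrr.
by rewrite add0r sqrrN expr1n.
Qed.

Lemma neighbour_inj : injective neighbour.
Proof.
case=> [i|] [i'|] //= e.
- move/(congr1 (fun z => coord z i')): e; rewrite !coord_incr eqxx.
  by case: eqP => [->|]; last lia.
- by move/(congr1 (fun z => coord z j)): e; rewrite coord_incr coord_upd eqxx; lia.
- by move/(congr1 (fun z => coord z j)): e; rewrite coord_incr coord_upd eqxx; lia.
Qed.

End Neighbours.

End Points.

Theorem corollary2p3 (n : nat) (hn : (2 <= n)%N) (a : NN n -> NN n) :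
  isometryNn a -> a (one_pt n) = one_pt n.
Proof.
move=> [[b _ ba] a_isom]; set y := a (one_pt n).
have [j yj|y1] := pickP (fun i => coord y i != 1); last first.
  by apply: eq_NN => i; rewrite coord_one; apply/eqP/negbFE/y1.
have yj_gt1 : 1 < coord y j by have := coord_gt0 y j; move: yj; lia.
have b_inj : injective b by apply: can_inj ba.
have dist_b o : dist2 (one_pt n) (b (neighbour yj_gt1 o)) = 1%R.
  by rewrite -a_isom ba dist2C dist2_neighbour.
have := card_unit_sphere_one (inj_comp b_inj (neighbour_inj (yj_gt1 := yj_gt1))) dist_b.
by rewrite card_option card_ord ltnn.
Qed.
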